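(* Let $s,t$ be planar trees and let $F_s^*,F_t^*$ be the dual basis elements in the graded dual $\mathrm{TSym}^*$ (whose product is the transpose of the coproduct $\Delta$ of $\mathrm{TSym}$). Then $$F_s^*\cdot F_t^*=\sum_{r:\ s\backslash t\ \le_{PT}\ r\ \le_{PT}\ s/t}F_r^*.$$
   Context: A planar tree is a rooted tree in which the children of each node are linearly ordered and every node has either no children (a leaf) or at least two children (an internal node); the one-leaf tree is allowed. If $t$ has $n+1$ leaves, $\deg t=n$; $\mathrm{ideg}(t)$ is the number of internal nodes; leaves are numbered $1,\dots,n+1$ from left to right. For $0\le i\le n$, with $P$ the path from the root to leaf $i+1$: ${}^it$ is obtained by deleting, at each internal node $v$ on $P$, the children of $v$ strictly to the right of the child on $P$ (with their subtrees) and then contracting every node with exactly one child; $t^i$ likewise deleting the children strictly to the left. The splitting is allowable if $\mathrm{ideg}({}^it)+\mathrm{ideg}(t^i)=\mathrm{ideg}(t)$. $\mathrm{TSym}$ has basis $\{F_t\}$ indexed by planar trees, with coproduct $\Delta(F_t)=\sum F_{{}^it}\otimes F_{t^i}$ over $0\le i\le\deg t$ with allowable splitting. $s/t$ is the tree obtained by identifying the root of $s$ with the leftmost leaf of $t$; $s\backslash t$ is obtained by identifying the root of $t$ with the rightmost leaf of $s$. Planar Tamari order: let $x$ be an internal node of a tree $s$ whose rightmost child $y$ is internal, with children of $x$ being $c_1,\dots,c_{a-1},y$ ($a\ge2$) and children of $y$ being $d_1,\dots,d_{b+1}$ ($b\ge1$), left to right. The left rotation of $s$ at $x$ replaces the subtree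 at $x$ by a node whose children are $z,d_2,\dots,d_{b+1}$, where $z$ is a new node with children $c_1,\dots,c_{a-1},d_1$ (all subtrees below these kept). The planar Tamari order $\le_{PT}$ on trees of a given degree is the reflexive–transitive closure of the relation ''$t$ is a left rotation of $s$''. *)

From Stdlib Require Import Relations.
From HB Require Import structures.
From mathcomp Require Import all_boot.
Set Implicit Arguments. Unset Strict Implicit. Unset Printing Implicit Defensive.

(* Planar rooted trees: a node is a leaf or has an ordered list of children.
   Well-formedness (every internal node has >= 2 children) is the predicate [wf]. *)
Inductive ptree := Leaf | Node of seq ptree.

Fixpoint ptree_eqb (s t : ptree) : bool :=
  match s, t with
  | Leaf, Leaf => true
  | Node cs, Node ds =>
      (fix go (cs ds : seq ptree) : bool :=
         match cs, ds with
         | [::], [::] => true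
         | c :: cs', d :: ds' => ptree_eqb c d && go cs' ds'
         | _, _ => false
         end) cs ds
  | _, _ => false
  end.

Lemma ptree_eqbP : forall s t : ptree, reflect (s = t) (ptree_eqb s t).
Proof.
fix IH 1 => s t; case: s => [|cs]; case: t => [|ds] /=; try by constructor.
have H : reflect (cs = ds)
  ((fix go (cs ds : seq ptree) : bool :=
      match cs, ds with
      | [::], [::] => true
      | c :: cs', d :: ds' => ptree_eqb c d && go cs' ds'
      | _, _ => false
      end) cs ds).
  elim: cs ds => [|c cs IHc] [|d ds] /=; try by constructor.
  case: (IH c d) => [->|Hne] /=; last by constructor => -[].
  by case: (IHc ds) => [->|Hne]; constructor => // -[].
by case: H => [->|Hne]; constructor => // -[].
Qed.

HB.instance Definition _ := hasDecEq.Build ptree ptree_eqbP.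

Fixpoint wf (t : ptree) : bool :=
  match t with
  | Leaf => true
  | Node cs => (1 < size cs) &&
      (fix go (cs : seq ptree) : bool :=
         match cs with [::] => true | c :: cs' => wf c && go cs' end) cs
  end.

Fixpoint nleaves (t : ptree) : nat :=
  match t with
  | Leaf => 1
  | Node cs =>
      (fix go (cs : seq ptree) : nat :=
         match cs with [::] => 0 | c :: cs' => nleaves c + go cs' end) cs
  end.

Definition deg (t : ptree) : nat := (nleaves t).-1.

Fixpoint ideg (t : ptree) : nat :=
  match t with
  | Leaf => 0
  | Node cs =>
      (fix go (cs : seq ptree) : nat :=
         match cs with [::] => 1 | c :: cs' => ideg c + go cs' end) cs
  end.

(* Leaves are indexed 0,1,...,deg t from the left; index i is leaf number i+1.
   [lsplit t i] = ^i t : at each node of the path to leaf i, delete the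
   children strictly right of the path child, contracting unary nodes.
   [acc] holds the children strictly left of the current one. *)
Fixpoint lsplit (t : ptree) (i : nat) : ptree :=
  match t with
  | Leaf => Leaf
  | Node cs =>
      (fix go (cs acc : seq ptree) (i : nat) : ptree :=
         match cs with
         | [::] => Leaf
         | c :: cs' =>
             if i < nleaves c then
               (if acc is [::] then lsplit c i else Node (rcons acc (lsplit c i)))
             else go cs' (rcons acc c) (i - nleaves c)
         end) cs [::] i
  end.

(* [rsplit t i] = t^i : delete the children strictly left of the path child. *)
Fixpoint rsplit (t : ptree) (i : nat) : ptree :=
  match t with
  | Leaf => Leaf
  | Node cs =>
      (fix go (cs : seq ptree) (i : nat) : ptree :=
         match cs with
         | [::] => Leaf
         | c :: cs' =>
             if i < nleaves c then
               (if cs' is [::] then rsplit c i else Node (rsplit c i :: cs'))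
             else go cs' (i - nleaves c)
         end) cs i
  end.

Definition allowable (t : ptree) (i : nat) : bool :=
  ideg (lsplit t i) + ideg (rsplit t i) == ideg t.

(* Coefficient of F_s (x) F_t in Delta(F_r); by duality it is the coefficient
   of F_r^* in the product F_s^* . F_t^* of the graded dual TSym^*. *)
Definition dual_prod_coeff (s t r : ptree) : nat :=
  count (fun i => [&& allowable r i, lsplit r i == s & rsplit r i == t])
        (iota 0 (deg r).+1).

(* s/t : root of s identified with the leftmost leaf of t *)
Fixpoint graft_over (s t : ptree) : ptree :=
  match t with
  | Leaf => s
  | Node [::] => Node [::]
  | Node (c :: cs) => Node (graft_over s c :: cs)
  end.

(* s\t : root of t identified with the rightmost leaf of s *)
Fixpoint graft_under (s t : ptree) : ptree :=
  match s with
  | Leaf => t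
  | Node cs =>
      Node ((fix go (cs : seq ptree) : seq ptree :=
         match cs with
         | [::] => [::]
         | [:: c] => [:: graft_under c t]
         | c :: cs' => c :: go cs'
         end) cs)
  end.

(* [lrot s t] : t is a left rotation of s (at the root, or inside a subtree).
   At the root: x has children c_1..c_{a-1}, y (a >= 2, i.e. cs <> [::]),
   y has children d_1..d_{b+1} (b >= 1, i.e. ds <> [::]); the result has
   children z, d_2..d_{b+1} where z has children c_1..c_{a-1}, d_1. *)
Inductive lrot : ptree -> ptree -> Prop :=
  | lrot_root (cs : seq ptree) (d1 : ptree) (ds : seq ptree) :
      cs <> [::] -> ds <> [::] ->
      lrot (Node (rcons cs (Node (d1 :: ds)))) (Node (Node (rcons cs d1) :: ds))
  | lrot_sub (cs1 : seq ptree) (c c' : ptree) (cs2 : seq ptree) :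
      lrot c c' -> lrot (Node (cs1 ++ c :: cs2)) (Node (cs1 ++ c' :: cs2)).

Definition le_PT : ptree -> ptree -> Prop := clos_refl_trans ptree lrot.

From HB Require Import structures.
From Stdlib Require Import Relations.
From mathcomp Require Import all_boot zify.
Set Implicit Arguments. Unset Strict Implicit. Unset Printing Implicit Defensive.

(* Since ^i r has i+1 leaves, only the position k = deg s can
   contribute, so the coefficient is 0 or 1 and the theorem says: r splits
   allowably at k into (s, t) iff s\t <= r <= s/t.
   - Forward: splitting at a fixed position is monotone for <=_PT (a left
     rotation induces a rotation or an equality on each side), s\t and s/t
     both split at k into (s, t), and <=_PT is antisymmetric (rotations
     strictly increase the total size of leftmost subtrees).  Allowability
     follows since rotations preserve the number of internal nodes.
   - Backward: by induction on r, an allowable splitting at a child of the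
     root reassembles into r, and the two ways of reassembling (grafting the
     pieces under / over each other) are reached by chains of rotations. *)

Lemma ptree_ind_mem (P : ptree -> Prop) :
  P Leaf -> (forall cs, (forall c, c \in cs -> P c) -> P (Node cs)) ->
  forall t, P t.
Proof.
move=> HL HN; fix IH 1 => t; case: t => [|cs]; first exact: HL.
apply: HN; elim: cs => [|d ds IHd] c; first by rewrite in_nil => F; exact: (False_ind _ (notF F)).
rewrite inE => /orP[/eqP->|]; last exact: IHd.
exact: IH.
Qed.

Notation fleaves cs := (sumn (map nleaves cs)).
Notation fideg cs := (sumn (map ideg cs)).

Lemma nleaves_Leaf : nleaves Leaf = 1. Proof. by []. Qed.

Lemma nleavesE cs : nleaves (Node cs) = fleaves cs.
Proof. by elim: cs => //= c cs ->. Qed.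

Lemma idegE cs : ideg (Node cs) = (fideg cs).+1.
Proof. by elim: cs => //= c cs ->; rewrite addnS. Qed.

Lemma wfE cs : wf (Node cs) = (1 < size cs) && all wf cs.
Proof. by rewrite /=; congr (_ && _); elim: cs => //= c cs ->. Qed.

Lemma sumn_map_rcons (f : ptree -> nat) cs x :
  sumn (map f (rcons cs x)) = sumn (map f cs) + f x.
Proof. by rewrite map_rcons -cats1 sumn_cat /= addn0. Qed.

Lemma sumn_map_cat3 (f : ptree -> nat) a c b :
  sumn (map f (a ++ c :: b)) = sumn (map f a) + f c + sumn (map f b).
Proof. by rewrite map_cat sumn_cat /= addnA. Qed.

Definition lsplit_forest : seq ptree -> seq ptree -> nat -> ptree :=
  fix go (cs acc : seq ptree) (i : nat) : ptree :=
  match cs with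
  | [::] => Leaf
  | c :: cs' =>
      if i < nleaves c then
        (if acc is [::] then lsplit c i else Node (rcons acc (lsplit c i)))
      else go cs' (rcons acc c) (i - nleaves c)
  end.

Definition rsplit_forest : seq ptree -> nat -> ptree :=
  fix go (cs : seq ptree) (i : nat) : ptree :=
  match cs with
  | [::] => Leaf
  | c :: cs' =>
      if i < nleaves c then
        (if cs' is [::] then rsplit c i else Node (rsplit c i :: cs'))
      else go cs' (i - nleaves c)
  end.

Lemma lsplit_forest_cat a c b j acc : j < nleaves c ->
  lsplit_forest (a ++ c :: b) acc (fleaves a + j) =
  if acc ++ a is [::] then lsplit c j else Node (rcons (acc ++ a) (lsplit c j)).
Proof.
move=> Hj; elim: a acc => [|x a IH] acc /=; first by rewrite Hj cats0.
rewrite ifN; last by lia.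
have -> : nleaves x + fleaves a + j - nleaves x = fleaves a + j by lia.
by rewrite IH -cats1 -catA; case: acc.
Qed.

Lemma lsplit_cat a c b j : j < nleaves c ->
  lsplit (Node (a ++ c :: b)) (fleaves a + j) =
  if a is [::] then lsplit c j else Node (rcons a (lsplit c j)).
Proof. exact: (@lsplit_forest_cat a c b j [::]). Qed.

Lemma rsplit_cat a c b j : j < nleaves c ->
  rsplit (Node (a ++ c :: b)) (fleaves a + j) =
  if b is [::] then rsplit c j else Node (rsplit c j :: b).
Proof.
move=> Hj; rewrite [LHS]/rsplit -/rsplit_forest.
elim: a => [|x a IH] /=; first by rewrite Hj.
rewrite ifN; last by lia.
by have -> : nleaves x + fleaves a + j - nleaves x = fleaves a + j by lia.
Qed.

Lemma lsplit_out cs i : fleaves cs <= i -> lsplit (Node cs) i = Leaf.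
Proof.
rewrite [lsplit _ _]/lsplit -/lsplit_forest.
elim: cs [::] i => [|x cs IH] acc i //= H.
by rewrite ifN; [apply: IH|]; lia.
Qed.

Lemma rsplit_out cs i : fleaves cs <= i -> rsplit (Node cs) i = Leaf.
Proof.
rewrite [rsplit _ _]/rsplit -/rsplit_forest.
elim: cs i => [|x cs IH] i //= H.
by rewrite ifN; [apply: IH|]; lia.
Qed.

Lemma forest_leaf_decomp cs i : i < fleaves cs ->
  exists a c b j, [/\ cs = a ++ c :: b, i = fleaves a + j & j < nleaves c].
Proof.
elim: cs i => [|x cs IH] i //= H.
case: (ltnP i (nleaves x)) => Hx; first by exists [::], x, cs, i.
have [a [c [b [j [-> E2 E3]]]]] := IH (i - nleaves x) ltac:(lia).
by exists (x :: a), c, b, j; split => //=; lia.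
Qed.

Arguments nleaves : simpl never.
Arguments ideg : simpl never.
Arguments lsplit : simpl never.
Arguments rsplit : simpl never.
Arguments wf : simpl never.

Lemma nonnil_rcons (b : seq ptree) x : rcons b x <> [::]. Proof. by case: b. Qed.
Lemma nonnil_cons (b : seq ptree) x : x :: b <> [::]. Proof. by []. Qed.
Lemma nonnil_cat_cons (a b : seq ptree) x : a ++ x :: b <> [::]. Proof. by case: a. Qed.
#[local] Hint Resolve nonnil_rcons nonnil_cons nonnil_cat_cons : core.

Lemma lsplit_head c b j : j < nleaves c -> lsplit (Node (c :: b)) j = lsplit c j.
Proof. exact: (@lsplit_cat [::]). Qed.

Lemma lsplit_inner a c b j : a <> [::] -> j < nleaves c ->
  lsplit (Node (a ++ c :: b)) (fleaves a + j) = Node (rcons a (lsplit c j)).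
Proof. by case: a => // x a _ H; rewrite lsplit_cat. Qed.

Lemma rsplit_last a c j : j < nleaves c ->
  rsplit (Node (a ++ [:: c])) (fleaves a + j) = rsplit c j.
Proof. by move=> H; rewrite rsplit_cat. Qed.

Lemma rsplit_inner a c b j : b <> [::] -> j < nleaves c ->
  rsplit (Node (a ++ c :: b)) (fleaves a + j) = Node (rsplit c j :: b).
Proof. by case: b => // x b _ H; rewrite rsplit_cat. Qed.

Lemma rsplit_head c b j : b <> [::] -> j < nleaves c ->
  rsplit (Node (c :: b)) j = Node (rsplit c j :: b).
Proof. exact: (@rsplit_inner [::]). Qed.

Fixpoint psize (t : ptree) : nat :=
  match t with Leaf => 1 | Node cs => (sumn (map psize cs)).+1 end.

(* Sum, over the internal nodes, of the size of the leftmost subtree; a left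
   rotation strictly increases it, which makes <=_PT antisymmetric. *)
Fixpoint left_weight (t : ptree) : nat :=
  match t with
  | Leaf => 0
  | Node cs => (if cs is c :: _ then psize c else 0) + sumn (map left_weight cs)
  end.

(* A left rotation moves no leaf and creates no node, and increases the
   left weight (the new node z has c_1 as leftmost child and is itself
   leftmost, strictly containing the old leftmost subtree c_1). *)
Lemma lrot_invariants u v : lrot u v ->
  [/\ psize u = psize v, nleaves u = nleaves v, ideg u = ideg v
    & left_weight u < left_weight v].
Proof.
elim=> {u v} [cs d1 ds Hcs Hds | cs1 c c' cs2 _ [E1 E2 E3 E4]].
  case: cs Hcs => [//|c0 cs] _.
  rewrite !nleavesE !idegE /= !sumn_map_rcons /= !nleavesE !idegE /= !sumn_map_rcons.
  split; lia.
rewrite !nleavesE !idegE /= !sumn_map_cat3 E1 E2 E3; split => //.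
by case: cs1 => [|x cs1] /=; rewrite ?sumn_map_cat3 /=; lia.
Qed.

Lemma le_PT_invariants u v : le_PT u v -> nleaves u = nleaves v /\ ideg u = ideg v.
Proof.
elim=> // [x y /lrot_invariants[_ ? ? _] | x y z _ [? ?] _ [? ?]] //.
by split; congruence.
Qed.

Lemma le_PT_left_weight u v : le_PT u v -> left_weight u <= left_weight v.
Proof. by elim=> // [x y /lrot_invariants[_ _ _ /ltnW] | x y z _ H1 _ H2 //]; lia. Qed.

Lemma le_PT_antisym u v : le_PT u v -> le_PT v u -> u = v.
Proof.
move=> /clos_rt_rt1n_iff [] // w y Hw Hy /le_PT_left_weight Hvu.
have [_ _ _ Hlt] := lrot_invariants Hw.
have := le_PT_left_weight (clos_rt1n_rt _ _ _ _ Hy); lia.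
Qed.

Lemma le_PT_child cs1 cs2 x y :
  le_PT x y -> le_PT (Node (cs1 ++ x :: cs2)) (Node (cs1 ++ y :: cs2)).
Proof.
elim=> [a b H | a | a b c _ H1 _ H2]; first by apply: rt_step; constructor.
  exact: rt_refl.
exact: rt_trans H1 H2.
Qed.

Lemma lrot_le u v : lrot u v -> le_PT u v. Proof. exact: rt_step. Qed.

Definition split_le (u v : ptree) : Prop :=
  forall i, le_PT (lsplit u i) (lsplit v i) /\ le_PT (rsplit u i) (rsplit v i).

(* [split_le] is a preorder, so it suffices to check it on rotations. *)
Lemma split_le_refl u : split_le u u.
Proof. by move=> i; split; apply: rt_refl. Qed.

Lemma split_le_trans u v w : split_le u v -> split_le v w -> split_le u w.
Proof.
move=> Huv Hvw i; have [A1 B1] := Huv i; have [A2 B2] := Hvw i.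
by split; [exact: rt_trans A1 A2 | exact: rt_trans B1 B2].
Qed.

(* Rotation at the root: depending on whether the split leaf lies in some c_i,
   in d_1, in some d_j (j >= 2) or beyond, the right pieces, nothing, the left
   pieces, or nothing are related by a rotation. *)
Lemma split_le_root cs d1 ds : cs <> [::] -> ds <> [::] ->
  split_le (Node (rcons cs (Node (d1 :: ds)))) (Node (Node (rcons cs d1) :: ds)).
Proof.
move=> Hcs Hds i; set y := Node (d1 :: ds); set z := Node (rcons cs d1).
have nly : nleaves y = nleaves d1 + fleaves ds by rewrite /y nleavesE.
have nlz : nleaves z = fleaves cs + nleaves d1 by rewrite /z nleavesE sumn_map_rcons.
case: (ltnP i (fleaves cs)) => H1.
  have [a [c [b [j [E1 E2 E3]]]]] := forest_leaf_decomp H1.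
  have Hz : i < nleaves z by lia.
  rewrite lsplit_head // rsplit_head // /z /y E1 !rcons_cat /= E2.
  rewrite !lsplit_cat // !rsplit_inner //; split; first exact: rt_refl.
  exact/lrot_le/(@lrot_root (rsplit c j :: b) d1 ds).
case: (ltnP i (fleaves cs + nleaves d1)) => H2.
  have [j Ej] : exists j, i = fleaves cs + j by exists (i - fleaves cs); lia.
  subst i.
  have Hz : fleaves cs + j < nleaves z by lia.
  have Hy : j < nleaves y by lia.
  have Hd : j < nleaves d1 by lia.
  rewrite lsplit_head // rsplit_head // /z -!cats1 lsplit_inner // rsplit_last //.
  rewrite lsplit_inner // rsplit_last // /y lsplit_head // rsplit_head //.
  by split; apply: rt_refl.
case: (ltnP i (fleaves cs + nleaves d1 + fleaves ds)) => H3; last first.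
  have Hu : fleaves (rcons cs y) <= i by rewrite sumn_map_rcons nly; lia.
  have Hv : fleaves (z :: ds) <= i by rewrite /= nlz; lia.
  by rewrite !lsplit_out // !rsplit_out //; split; apply: rt_refl.
have Hk : i - fleaves cs - nleaves d1 < fleaves ds by lia.
have [a [c [b [j [E1 E2 E3]]]]] := forest_leaf_decomp Hk.
have Eu : i = fleaves cs + (fleaves (d1 :: a) + j) by rewrite /=; lia.
have Ev : i = fleaves (z :: a) + j by rewrite /= nlz; lia.
have Hy : fleaves (d1 :: a) + j < nleaves y by rewrite /= nly E1 sumn_map_cat3; lia.
split.
  rewrite {1}Eu -cats1 lsplit_inner // /y E1 -/(cat (d1 :: a) (c :: b)) lsplit_inner //.
  rewrite Ev -/(cat (z :: a) (c :: b)) lsplit_inner //=.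
  exact/lrot_le/(@lrot_root cs d1 (rcons a (lsplit c j))).
rewrite {1}Eu -cats1 rsplit_last // /y E1 -/(cat (d1 :: a) (c :: b)) rsplit_cat //.
by rewrite Ev -/(cat (z :: a) (c :: b)) rsplit_cat //; apply: rt_refl.
Qed.

(* Rotation inside the child c of the root: the pieces containing c are
   related by induction, the other pieces by a rotation inside c or not at all. *)
Lemma split_le_child cs1 c c' cs2 : lrot c c' -> split_le c c' ->
  split_le (Node (cs1 ++ c :: cs2)) (Node (cs1 ++ c' :: cs2)).
Proof.
move=> Hc IH i; have [_ Enl _ _] := lrot_invariants Hc.
case: (ltnP i (fleaves cs1)) => H1.
  have [a [e [b [j [E1 E2 E3]]]]] := forest_leaf_decomp H1.
  rewrite E1 E2 -!catA !lsplit_cat // !rsplit_inner //; split; first exact: rt_refl.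
  exact/lrot_le/(@lrot_sub (rsplit e j :: b) c c' cs2).
case: (ltnP i (fleaves cs1 + nleaves c)) => H2.
  have [j Ej] : exists j, i = fleaves cs1 + j by exists (i - fleaves cs1); lia.
  subst i.
  have Hj : j < nleaves c by lia.
  have Hj' : j < nleaves c' by lia.
  rewrite !lsplit_cat // !rsplit_cat //; have [IH1 IH2] := IH j; split.
    by case: cs1 {H1 H2} => [|x cs1] //; rewrite -!cats1; apply: le_PT_child.
  by case: cs2 => [|x cs2] //; exact: (le_PT_child [::]).
case: (ltnP i (fleaves cs1 + nleaves c + fleaves cs2)) => H3; last first.
  have Hu : fleaves (cs1 ++ c :: cs2) <= i by rewrite sumn_map_cat3; lia.
  have Hv : fleaves (cs1 ++ c' :: cs2) <= i by rewrite sumn_map_cat3; lia.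
  by rewrite !lsplit_out // !rsplit_out //; split; apply: rt_refl.
have Hk : i - fleaves cs1 - nleaves c < fleaves cs2 by lia.
have [a [e [b [j [E1 E2 E3]]]]] := forest_leaf_decomp Hk.
have Eu : i = fleaves (cs1 ++ c :: a) + j by rewrite sumn_map_cat3; lia.
have Ev : i = fleaves (cs1 ++ c' :: a) + j by rewrite sumn_map_cat3; lia.
have Ecat x : cs1 ++ x :: a ++ e :: b = (cs1 ++ x :: a) ++ e :: b by rewrite -catA.
rewrite E1 !Ecat {1 3}Eu Ev !lsplit_inner // !rsplit_cat //.
split; last exact: rt_refl.
by rewrite !rcons_cat /=; apply/lrot_le/lrot_sub.
Qed.

Lemma le_PT_split u v : le_PT u v -> split_le u v.
Proof.
elim=> [x y H | x | x y z _ H1 _ H2]; [|exact: split_le_refl|exact: split_le_trans H1 H2].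
elim: H => {x y} [cs d1 ds Hcs Hds | cs1 c c' cs2 Hc IH].
  exact: split_le_root.
exact: split_le_child.
Qed.

Lemma wf_rcons cs : wf (Node cs) ->
  exists a c, [/\ cs = rcons a c, a <> [::], all wf a & wf c].
Proof.
rewrite wfE => /andP[Hs Ha].
case/lastP: cs Hs Ha => [//|a c] Hs; rewrite all_rcons => /andP[Hc Ha].
by exists a, c; split => //; case: a {Ha} Hs.
Qed.

Lemma wf_cons c cs : wf (Node (c :: cs)) -> [/\ cs <> [::], wf c & all wf cs].
Proof. by rewrite wfE /= => /andP[H /andP[-> ->]]; split => //; case: cs H. Qed.

Lemma mem_rcons_self (a : seq ptree) c : c \in rcons a c.
Proof. by rewrite mem_rcons mem_head. Qed.

Lemma nleaves_gt0 x : wf x -> 0 < nleaves x.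
Proof.
elim/ptree_ind_mem: x => // cs IH /wf_rcons [a [c [Ecs _ _ Hc]]]; subst cs.
rewrite nleavesE sumn_map_rcons; have := IH c (mem_rcons_self a c) Hc; lia.
Qed.

Lemma graft_under_rcons a c t :
  graft_under (Node (rcons a c)) t = Node (rcons a (graft_under c t)).
Proof. by elim: a => //= x a [->]; case: a. Qed.

(* Grafting identifies one leaf with a root: leaves add up minus one and
   internal nodes add up. *)
Lemma nleaves_graft_under s t : wf s ->
  nleaves (graft_under s t) = nleaves s + nleaves t - 1.
Proof.
elim/ptree_ind_mem: s => [|cs IH]; first by move=> _; rewrite /= nleaves_Leaf; lia.
move=> /wf_rcons [a [c [Ecs _ _ Hc]]]; subst cs.
rewrite graft_under_rcons !nleavesE !sumn_map_rcons (IH c (mem_rcons_self a c) Hc).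
have := nleaves_gt0 Hc; lia.
Qed.

Lemma ideg_graft_under s t : wf s -> ideg (graft_under s t) = ideg s + ideg t.
Proof.
elim/ptree_ind_mem: s => [|cs IH] // /wf_rcons [a [c [Ecs _ _ Hc]]]; subst cs.
rewrite graft_under_rcons !idegE !sumn_map_rcons (IH c (mem_rcons_self a c) Hc); lia.
Qed.

Lemma nleaves_graft_over s t : wf t ->
  nleaves (graft_over s t) = nleaves s + nleaves t - 1.
Proof.
elim/ptree_ind_mem: t => [|[|c cs] IH]; first by move=> _; rewrite /= nleaves_Leaf; lia.
  by rewrite wfE.
move=> /wf_cons [_ Hc _].
rewrite /= !nleavesE /= IH ?mem_head //; have := nleaves_gt0 Hc; lia.
Qed.

Lemma lsplit_last_leaf x : wf x -> lsplit x (deg x) = x.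
Proof.
rewrite /deg; elim/ptree_ind_mem: x => [|cs IH] // /wf_rcons [a [c [Ecs Ha _ Hc]]]; subst cs.
have Hp := nleaves_gt0 Hc.
rewrite nleavesE sumn_map_rcons -cats1.
have -> : (fleaves a + nleaves c).-1 = fleaves a + (nleaves c).-1 by lia.
by rewrite lsplit_inner // ?IH ?cats1 ?mem_rcons_self //; lia.
Qed.

Lemma rsplit_last_leaf x : wf x -> rsplit x (deg x) = Leaf.
Proof.
rewrite /deg; elim/ptree_ind_mem: x => [|cs IH] // /wf_rcons [a [c [Ecs _ _ Hc]]]; subst cs.
have Hp := nleaves_gt0 Hc.
rewrite nleavesE sumn_map_rcons -cats1.
have -> : (fleaves a + nleaves c).-1 = fleaves a + (nleaves c).-1 by lia.
by rewrite rsplit_last ?IH ?mem_rcons_self //; lia.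
Qed.

Lemma lsplit_first_leaf x : wf x -> lsplit x 0 = Leaf.
Proof.
elim/ptree_ind_mem: x => [_|[|c cs] IH] // /wf_cons [_ Hc _].
by rewrite lsplit_head ?IH ?mem_head // nleaves_gt0.
Qed.

Lemma rsplit_first_leaf x : wf x -> rsplit x 0 = x.
Proof.
elim/ptree_ind_mem: x => [_|[|c cs] IH] // /wf_cons [Hn Hc _].
by rewrite rsplit_head ?IH ?mem_head // nleaves_gt0.
Qed.

Lemma split_graft_under s t : wf s -> wf t ->
  lsplit (graft_under s t) (deg s) = s /\ rsplit (graft_under s t) (deg s) = t.
Proof.
move=> Hs Ht; elim/ptree_ind_mem: s Hs => [|cs IH].
  by move=> _; rewrite /= lsplit_first_leaf // rsplit_first_leaf.
move=> /wf_rcons [a [c [Ecs Ha _ Hc]]]; subst cs.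
have Hp := nleaves_gt0 Hc; have Hq := nleaves_gt0 Ht.
rewrite /deg graft_under_rcons nleavesE sumn_map_rcons -!cats1.
have -> : (fleaves a + nleaves c).-1 = fleaves a + (nleaves c).-1 by lia.
have Hl : (nleaves c).-1 < nleaves (graft_under c t) by rewrite nleaves_graft_under //; lia.
rewrite lsplit_inner // rsplit_last //.
by have [-> ->] := IH c (mem_rcons_self a c) Hc; rewrite cats1.
Qed.

Lemma split_graft_over s t : wf s -> wf t ->
  lsplit (graft_over s t) (deg s) = s /\ rsplit (graft_over s t) (deg s) = t.
Proof.
move=> Hs; elim/ptree_ind_mem: t => [|[|c cs] IH].
- by move=> _; rewrite /= lsplit_last_leaf // rsplit_last_leaf.
- by rewrite wfE.
move=> /wf_cons [Hn Hc _].
have Hp := nleaves_gt0 Hs; have Hq := nleaves_gt0 Hc.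
have Hl : deg s < nleaves (graft_over s c) by rewrite nleaves_graft_over // /deg; lia.
rewrite /= lsplit_head // rsplit_head //.
by have [-> ->] := IH c (mem_head _ _) Hc.
Qed.

Lemma ideg_rcons a x : ideg (Node (rcons a x)) = (fideg a + ideg x).+1.
Proof. by rewrite idegE sumn_map_rcons. Qed.

Lemma ideg_cons x b : ideg (Node (x :: b)) = (ideg x + fideg b).+1.
Proof. by rewrite idegE. Qed.

(* Splitting never loses internal nodes: each node off the path goes to one
   side, and each node on the path survives on at least one side. *)
Lemma ideg_split_ge r i : wf r -> i < nleaves r ->
  ideg r <= ideg (lsplit r i) + ideg (rsplit r i).
Proof.
elim/ptree_ind_mem: r i => [|cs IH] i; first by rewrite nleaves_Leaf; case: i.
rewrite nleavesE => Hw Hi; have [a [c [b [j [E1 E2 E3]]]]] := forest_leaf_decomp Hi.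
subst cs i; move: Hw; rewrite wfE all_cat /= => /andP[Hs /and3P[_ Hwc _]].
have Hc : c \in a ++ c :: b by rewrite mem_cat mem_head orbT.
have := IH c Hc j Hwc E3.
rewrite lsplit_cat // rsplit_cat // idegE sumn_map_cat3.
case: a {IH Hc Hi} Hs => [|x a]; case: b => [|y b] //= _;
  rewrite ?ideg_rcons ?ideg_cons /= ?ideg_rcons ?sumn_map_rcons; lia.
Qed.

Lemma graft_over_rcons_ge t : wf t -> forall a s, a <> [::] ->
  le_PT (Node (rcons a (graft_over s t))) (graft_over (Node (rcons a s)) t).
Proof.
elim/ptree_ind_mem: t => [|[|t1 ts] IH] Ht a s Ha; first exact: rt_refl.
  by move: Ht; rewrite wfE.
have [Hn H1 _] := wf_cons Ht.
apply: (@rt_trans _ _ _ (Node (Node (rcons a (graft_over s t1)) :: ts))).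
  exact/lrot_le/lrot_root.
exact: (le_PT_child [::]) (IH t1 (mem_head _ _) H1 a s Ha).
Qed.

Lemma graft_under_cons_le s : wf s -> forall t b, b <> [::] ->
  le_PT (graft_under s (Node (t :: b))) (Node (graft_under s t :: b)).
Proof.
elim/ptree_ind_mem: s => [|cs IH] Hs t b Hb; first exact: rt_refl.
have [a [c [Ecs Ha _ Hc]]] := wf_rcons Hs; subst cs.
rewrite !graft_under_rcons.
apply: (@rt_trans _ _ _ (Node (rcons a (Node (graft_under c t :: b))))).
  by rewrite -!cats1; exact: le_PT_child (IH c (mem_rcons_self a c) Hc t b Hb).
exact/lrot_le/lrot_root.
Qed.

Arguments graft_under : simpl never.
Arguments graft_over : simpl never.

(* At the root, allowability forces the split leaf to
   lie in the first or in the last child, and the two cases are dual. *)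
Lemma allowable_split_interval r i :
  wf r -> i < nleaves r -> allowable r i ->
  wf (lsplit r i) -> wf (rsplit r i) ->
  le_PT (graft_under (lsplit r i) (rsplit r i)) r /\
  le_PT r (graft_over (lsplit r i) (rsplit r i)).
Proof.
elim/ptree_ind_mem: r i => [|cs IH] i Hw.
  by rewrite nleaves_Leaf; case: i => // _ _ _ _; split; apply: rt_refl.
rewrite nleavesE => Hi; have [a [c [b [j [E1 E2 E3]]]]] := forest_leaf_decomp Hi.
subst cs i; move: (Hw); rewrite wfE all_cat /= => /andP[Hs /and3P[_ Hwc _]].
have Hc : c \in a ++ c :: b by rewrite mem_cat mem_head orbT.
have Hge := ideg_split_ge Hwc E3.
have IHc := IH c Hc j Hwc E3.
rewrite /allowable lsplit_cat // rsplit_cat // idegE sumn_map_cat3.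
case: a {IH Hc Hi Hw} Hs => [|x a]; case: b => [|y b] //= _.
- rewrite ideg_cons /= => /eqP Hal Hwl /wf_cons [_ Hwr _].
  have [IH1 IH2] := IHc ltac:(apply/eqP; lia) Hwl Hwr.
  split; last exact: (le_PT_child [::] (y :: b) IH2).
  exact: rt_trans (graft_under_cons_le Hwl _ (@nonnil_cons b y))
                  (le_PT_child [::] (y :: b) IH1).
- rewrite -rcons_cons ideg_rcons /= => /eqP Hal Hwl Hwr.
  have Hwl' : wf (lsplit c j) by move: Hwl; rewrite wfE -rcons_cons all_rcons => /andP[_ /andP[]].
  have [IH1 IH2] := IHc ltac:(apply/eqP; lia) Hwl' Hwr.
  rewrite -rcons_cons graft_under_rcons -cat_cons -!cats1; split.
    exact: (le_PT_child (x :: a) [::] IH1).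
  apply: rt_trans (le_PT_child (x :: a) [::] IH2) _.
  by rewrite !cats1; exact: graft_over_rcons_ge.
- by rewrite -rcons_cons ideg_rcons ideg_cons /= => /eqP; lia.
Qed.

Lemma nleaves_lsplit r i : i < nleaves r -> nleaves (lsplit r i) = i.+1.
Proof.
elim/ptree_ind_mem: r i => [|cs IH] i; first by rewrite nleaves_Leaf; case: i.
rewrite nleavesE => Hi; have [a [c [b [j [E1 E2 E3]]]]] := forest_leaf_decomp Hi.
subst cs i; have Hc : c \in a ++ c :: b by rewrite mem_cat mem_head orbT.
have IHc := IH c Hc j E3; rewrite lsplit_cat //.
case: a {IH Hc Hi} => [|x a] //=.
by rewrite nleavesE -rcons_cons sumn_map_rcons IHc /=; lia.
Qed.

Lemma count_iota_single (P : pred nat) k n :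
  (forall i, i < n -> P i -> i = k) -> count P (iota 0 n) = (k < n) && P k.
Proof.
move=> Honly; rewrite -(@eq_in_count _ (fun i => (i == k) && P k)); last first.
  move=> i; rewrite mem_iota add0n => /= Hi.
  case: (boolP (P i)) => Pi; first by rewrite -(Honly i Hi Pi) eqxx Pi.
  by case: eqP => // Eik; rewrite -Eik (negbTE Pi).
case: (P k); last by under eq_count do rewrite andbF; rewrite andbF count_pred0.
under eq_count do rewrite andbT.
by rewrite andbT count_uniq_mem ?iota_uniq // mem_iota.
Qed.

Definition splits_into (r : ptree) (i : nat) (s t : ptree) : bool :=
  [&& allowable r i, lsplit r i == s & rsplit r i == t].

(* Only the leaf [deg s] can cut [r] into a left piece equal to [s]. *)
Lemma dual_prod_coeffE s t r : wf r ->
  dual_prod_coeff s t r = (deg s <= deg r) && splits_into r (deg s) s t.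
Proof.
move=> Hr; have Hpos := nleaves_gt0 Hr.
apply: count_iota_single => i Hi /and3P[_ /eqP <- _].
by rewrite /deg nleaves_lsplit //; rewrite /deg in Hi; lia.
Qed.

(* Forward direction: the interval endpoints split at [deg s] into [(s, t)],
   hence so does every [r] in between, by monotonicity and antisymmetry. *)
Lemma interval_splits s t r : wf s -> wf t ->
  le_PT (graft_under s t) r -> le_PT r (graft_over s t) ->
  (deg s <= deg r) && splits_into r (deg s) s t.
Proof.
move=> Hs Ht Hlo Hhi; have [Enl Eid] := le_PT_invariants Hlo.
have [l1 r1] := le_PT_split Hlo (deg s); have [l2 r2] := le_PT_split Hhi (deg s).
have [g1 g2] := split_graft_under Hs Ht; have [h1 h2] := split_graft_over Hs Ht.
rewrite g1 g2 in l1 r1; rewrite h1 h2 in l2 r2.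
have El := le_PT_antisym l2 l1; have Er := le_PT_antisym r1 r2.
have Hpos := nleaves_gt0 Ht.
apply/andP; split; first by rewrite /deg -Enl nleaves_graft_under // /deg; lia.
by rewrite /splits_into /allowable El -Er -Eid ideg_graft_under // !eqxx.
Qed.

Lemma splits_interval s t r : wf s -> wf t -> wf r ->
  deg s <= deg r -> splits_into r (deg s) s t ->
  le_PT (graft_under s t) r /\ le_PT r (graft_over s t).
Proof.
move=> Hs Ht Hr Hk /and3P[Ha /eqP El /eqP Er]; have Hpos := nleaves_gt0 Hr.
rewrite -El -Er; apply: allowable_split_interval; rewrite ?El ?Er //.
by move: Hk; rewrite /deg; lia.
Qed.

Theorem mainTheorem3 (s t : ptree) :
  wf s -> wf t ->
  forall r : ptree, wf r ->
    (le_PT (graft_under s t) r /\ le_PT r (graft_over s t) ->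
       dual_prod_coeff s t r = 1) /\
    (~ (le_PT (graft_under s t) r /\ le_PT r (graft_over s t)) ->
       dual_prod_coeff s t r = 0).
Proof.
move=> Hs Ht r Hr; rewrite dual_prod_coeffE //; split.
  by move=> [Hlo Hhi]; rewrite interval_splits.
move=> Hout; apply/eqP; rewrite eqb0; apply/andP => -[Hk Hsplit].
exact/Hout/splits_interval.
Qed.
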